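(* Let $k\geq 1$ and let $\zeta_1,\dots,\zeta_k\in(0,1)$ be real numbers such that $1,\zeta_1,\dots,\zeta_k$ are linearly independent over $\mathbb{Q}$. With the sequences $b_n^{(s)}$, $b_n^{\prime(s)}$ defined in the context, $$\widehat{\omega}\geq\max\left\{\sup_{s\ge2}\liminf_{n\to\infty}\max_{1\le j\le n}\frac{b^{(s)}_{j+1}-b^{(s)}_j-1}{b^{(s)}_{n+1}},\ \sup_{s\ge2}\liminf_{n\to\infty}\max_{1\le j\le n}\frac{b^{\prime(s)}_{j+1}-b^{\prime(s)}_j-1}{b^{\prime(s)}_{n+1}}\right\}.$$
   Context: For $X>0$ let $\omega_1(X)$ be the supremum of all real $\nu$ such that $|x|\leq X$, $|\zeta_i x-y_i|\leq X^{-\nu}$ ($1\le i\le k$) has a nonzero solution $(x,y_1,\dots,y_k)\in\mathbb{Z}^{k+1}$; $\widehat\omega=\liminf_{X\to\infty}\omega_1(X)$. For an integer $s\ge2$, let $a_1^{i,(s)}<a_2^{i,(s)}<\cdots$ be the positions (after the point) of the nonzero digits in the base-$s$ expansion of $\zeta_i$, and $a_1^{\prime i,(s)}<a_2^{\prime i,(s)}<\cdots$ those of $1-\zeta_i$. Let $(b_n^{(s)})_{n\ge1}$ be the increasing enumeration of $\{a_n^{i,(s)}:1\le i\le k, n\ge1\}$ and $(b_n^{\prime(s)})_{n\ge1}$ the increasing enumeration of $\{a_n^{\prime i,(s)}:1\le i\le k,n\ge1\}$. *)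

From HB Require Import structures.
From mathcomp Require Import all_boot all_order all_algebra.
From mathcomp Require Import all_classical all_reals all_analysis.
Set Implicit Arguments. Unset Strict Implicit. Unset Printing Implicit Defensive.
Import Order.TTheory GRing.Theory Num.Theory.
Local Open Scope classical_set_scope.
Local Open Scope ring_scope.

Section Defs.
Variable R : realType.

Definition Q_lin_indep (k : nat) (zeta : 'I_k -> R) : Prop :=
  forall (c0 : rat) (c : 'I_k -> rat),
    ratr c0 + \sum_(i < k) ratr (c i) * zeta i = 0 ->
    c0 = 0 /\ forall i, c i = 0.

Definition admissible_nu (k : nat) (zeta : 'I_k -> R) (X : R) : set R :=
  [set nu | exists (x : int) (y : 'I_k -> int),
     ((x != 0) \/ exists i, y i != 0) /\
     `|x%:~R| <= X /\
     forall i, `| zeta i * x%:~R - (y i)%:~R | <= X `^ (- nu)].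

Definition omega1 (k : nat) (zeta : 'I_k -> R) (X : R) : \bar R :=
  ereal_sup [set nu%:E | nu in admissible_nu zeta X].

Definition omega_hat (k : nat) (zeta : 'I_k -> R) : \bar R :=
  limf_einf (omega1 zeta : R^o -> \bar R) (pinfty_nbhs R).

(* n-th digit (n >= 1) after the point of the base-s expansion of z *)
Definition digit (s : nat) (z : R) (n : nat) : int :=
  Num.floor (z * s%:R ^+ n) - s%:Z * Num.floor (z * s%:R ^+ n.-1).

Definition nonzero_positions (k : nat) (zeta : 'I_k -> R) (s : nat) : set nat :=
  [set n | (1 <= n)%N /\ exists i : 'I_k, digit s (zeta i) n != 0].

Definition increasing_enum (P : set nat) (b : nat -> nat) : Prop :=
  (forall n, (1 <= n)%N -> (b n < b n.+1)%N) /\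
  [set b n | n in [set n | (1 <= n)%N]] = P.

Definition gap_ratio (b : nat -> nat) (n : nat) : R :=
  \big[Num.max/0]_(1 <= j < n.+1)
     (((b j.+1)%:R - (b j)%:R - 1) / (b n.+1)%:R).

Definition sup_liminf_gaps (b : nat -> nat -> nat) : \bar R :=
  ereal_sup [set limn_einf (fun n => (gap_ratio (b s) n)%:E) | s in [set s | (2 <= s)%N]].

End Defs.

From HB Require Import structures.
From mathcomp Require Import all_boot all_order all_algebra.
From mathcomp Require Import all_classical all_reals all_analysis.
From mathcomp Require Import ring lra zify.
Import Order.TTheory GRing.Theory Num.Theory.
Local Open Scope classical_set_scope.
Local Open Scope ring_scope.
Set Implicit Arguments. Unset Strict Implicit. Unset Printing Implicit Defensive.

(* If no zeta_i has a nonzero base-s digit at positions b_j + 1, ..., b_(j+1) - 1,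
   then x = s^(b_j) brings every zeta_i x within s^-(b_(j+1) - b_j - 1) of an
   integer.  Given X, choose n with s^(b_n) <= X < s^(b_(n+1)) and j <= n with
   b_(j+1) - b_j - 1 >= nu b_(n+1), where nu is below the liminf of the gap
   ratios: then x <= X and the distance is at most X^-nu, so omega_1(X) >= nu
   for all large X.  For the digits of 1 - zeta_i the same x works with
   y_i = x - floor((1 - zeta_i) x). *)

Section Digits.
Variables (R : realType) (s : nat) (z : R).

Lemma floor_mulr_expn_zero_digits (N m : nat) :
  (forall n, (N < n <= N + m)%N -> digit s z n = 0) ->
  (Num.floor (z * s%:R ^+ (N + m)))%:~R = s%:R ^+ m * (Num.floor (z * s%:R ^+ N))%:~R :> R.
Proof.
elim: m => [|m IH] zero_digits; first by rewrite addn0 expr0 mul1r.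
have /eqP : digit s z (N + m).+1 = 0.
  by apply: zero_digits; rewrite ltnS leq_addr addnS leqnn.
rewrite /digit /= subr_eq0 addnS => /eqP ->.
rewrite intrM IH ?exprS ?mulrA // => n /andP[Nn nm].
by apply: zero_digits; rewrite Nn addnS (leq_trans nm).
Qed.

Lemma frac_lt_zero_digits (N g : nat) : (0 < s)%N ->
  (forall n, (N < n <= N + g)%N -> digit s z n = 0) ->
  0 <= z * s%:R ^+ N - (Num.floor (z * s%:R ^+ N))%:~R < (s%:R ^+ g)^-1.
Proof.
move=> s_gt0 /floor_mulr_expn_zero_digits floorE.
have sg_gt0 : 0 < s%:R ^+ g :> R by rewrite exprn_gt0 // ltr0n.
rewrite subr_ge0 floor_le /= ltrBlDl -(ltr_pM2r sg_gt0) mulrDl mulVf ?gt_eqF //.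
rewrite -mulrA -exprD [_ * s%:R ^+ g]mulrC -floorE.
have := floorD1_gt (z * s%:R ^+ (N + g)); by rewrite intrD.
Qed.

End Digits.

Section IncreasingEnum.
Variables (P : set nat) (b : nat -> nat).
Hypothesis bP : increasing_enum P b.

Lemma increasing_enum_leq_mono : {in [pred n | 0 < n] &, {mono b : m n / m <= n}}%N.
Proof.
apply: leq_mono_in; apply: homo_ltn_in; first exact: ltn_trans.
  by move=> i j i_gt0 _ m /andP[im _]; apply: ltn_trans im.
by move=> i i_gt0 _; exact: bP.1.
Qed.

Lemma increasing_enum_ltn_mono : {in [pred n | 0 < n] &, {mono b : m n / m < n}}%N.
Proof. exact/leqW_mono_in/increasing_enum_leq_mono. Qed.

Lemma leq_increasing_enum n : (n <= b n.+1)%N.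
Proof. by elim: n => // n IH; exact: leq_ltn_trans IH (bP.1 _ _). Qed.

Lemma increasing_enum_gap j m : (0 < j)%N -> (b j < m < b j.+1)%N -> ~ P m.
Proof.
move=> j_gt0 /andP[jm mj]; case: bP => _ <- [n /= n_gt0 bnm].
move: jm mj; rewrite -bnm !increasing_enum_ltn_mono //; lia.
Qed.

End IncreasingEnum.

Lemma gap_ratio_gt (R : realType) (b : nat -> nat) n (nu : R) :
  0 <= nu -> nu < gap_ratio R b n ->
  exists2 j, (0 < j <= n)%N & nu < ((b j.+1)%:R - (b j)%:R - 1) / (b n.+1)%:R.
Proof.
move=> nu_ge0 nu_lt; apply: contrapT => no_gap; move: nu_lt; apply/negP; rewrite -leNgt.
rewrite /gap_ratio big_nat_cond; apply: bigmax_le => // j /andP[/andP[j_gt0 jn] _].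
by rewrite leNgt; apply/negP => nu_lt; apply: no_gap; exists j; rewrite ?j_gt0.
Qed.

Lemma invr_expr_le_powRN (R : realType) (s X nu : R) (m g : nat) :
  1 <= s -> 0 < X -> X <= s ^+ m -> 0 <= nu -> nu * m%:R <= g%:R ->
  (s ^+ g)^-1 <= X `^ (- nu).
Proof.
move=> s_ge1 X_gt0 Xsm nu_ge0 nu_m_le_g.
have s_gt0 : 0 < s := lt_le_trans ltr01 s_ge1.
rewrite powRN lef_pV2 ?posrE ?powR_gt0 ?exprn_gt0 //.
apply: (@le_trans _ _ ((s ^+ m) `^ nu)).
  by apply: ge0_ler_powR; rewrite // nnegrE ?exprn_ge0 ?ltW.
by rewrite -!powR_mulrn ?(ltW s_gt0) // -powRrM; apply: ler_powR; rewrite // mulrC.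
Qed.

Section ExtendedReals.
Variable R : realType.
Local Open Scope ereal_scope.

Lemma lee_EFin_lt (x y : \bar R) : (forall r : R, r%:E < x -> r%:E <= y) -> x <= y.
Proof.
case: x => [a| |] H; last by rewrite leNye.
- case: y H => [c| |] H; [|by rewrite leey|].
  + rewrite lee_fin leNgt; apply/negP => ca.
    have := H ((c + a) / 2)%R; rewrite !lte_fin lee_fin (midf_lt ca).2 => /(_ isT).
    by rewrite leNgt (midf_lt ca).1.
  + by have := H (a - 1)%R; rewrite lte_fin gtrBl ltr01 leeNy_eq => /(_ isT).
- case: y H => [c| |] H; [|by rewrite leey|].
  + by have := H (c + 1)%R; rewrite ltry lee_fin gerDl ler10 => /(_ isT).
  + by have := H 0%R; rewrite ltry leeNy_eq => /(_ isT).
Qed.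

Lemma lt_limn_einf (u : (\bar R)^nat) (a : R) :
  a%:E < limn_einf u -> exists n0, forall n, (n0 <= n)%N -> a%:E < u n.
Proof.
rewrite /limn_einf -/(limf_einf u \oo) limf_einfE => /ereal_sup_gt[_ [V [n0 _ Vn0] <-]].
move=> a_lt; exists n0 => n n0n; apply: lt_le_trans a_lt _.
by apply: ereal_inf_lbound; exists n => //; exact: Vn0.
Qed.

End ExtendedReals.

Section OmegaHat.
Variables (R : realType) (k : nat) (zeta : 'I_k -> R).

Lemma omega_hat_ge (nu M : R) :
  (forall X, M < X -> admissible_nu zeta X nu) -> (nu%:E <= omega_hat zeta)%E.
Proof.
move=> adm; rewrite /omega_hat limf_einfE.
have M_lt : pinfty_nbhs R [set X | M < X] by exists M; split=> //; exact: num_real.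
apply: le_trans (ereal_sup_ubound _); last by exists [set X | M < X].
apply/ereal_infP => _ [X /= MX <-].
by apply: ereal_sup_ubound; exists nu => //; exact: adm.
Qed.

Lemma omega_hat_ge0 : (forall i, `|zeta i| <= 1) -> (0 <= omega_hat zeta)%E.
Proof.
move=> zeta_le1; apply: (@omega_hat_ge 0 1) => X X_gt1.
exists 1%Z, (fun=> 0%Z); split; first by left.
split=> [|i]; first by rewrite normr1 ltW.
by rewrite oppr0 powRr0 mulr1 addr0.
Qed.

Definition floor_approx (w : 'I_k -> R) (x : nat) (eps : R) :=
  forall i, `|w i * x%:R - (Num.floor (w i * x%:R))%:~R| <= eps.

Lemma admissible_nu_floor_approx (X nu : R) (x : nat) : (0 < x)%N -> x%:R <= X ->
  floor_approx zeta x (X `^ (- nu)) -> admissible_nu zeta X nu.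
Proof.
move=> x_gt0 xX approx; exists x%:Z, (fun i => Num.floor (zeta i * x%:R)).
by split; [left; rewrite eqz_nat -lt0n | split; [rewrite ger0_norm|]].
Qed.

Lemma admissible_nu_floor_approx_compl (X nu : R) (x : nat) : (0 < x)%N -> x%:R <= X ->
  floor_approx (fun i => 1 - zeta i) x (X `^ (- nu)) -> admissible_nu zeta X nu.
Proof.
move=> x_gt0 xX approx.
exists x%:Z, (fun i => x%:Z - Num.floor ((1 - zeta i) * x%:R)).
split; first by left; rewrite eqz_nat -lt0n.
split=> [|i]; first by rewrite ger0_norm.
rewrite -normrN; set m := Num.floor _.
have -> : - (zeta i * (x%:Z)%:~R - (x%:Z - m)%:~R) = (1 - zeta i) * x%:R - m%:~R.
  by rewrite intrB /=; ring.
exact: approx.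
Qed.

End OmegaHat.

Section DigitGapApproximation.
Variables (R : realType) (k : nat) (z : 'I_k -> R) (s : nat) (b : nat -> nat).
Hypotheses (s_ge2 : (2 <= s)%N) (bP : increasing_enum (nonzero_positions z s) b).

Lemma digit_in_gap i j m : (0 < j)%N -> (b j < m < b j.+1)%N -> digit s (z i) m = 0.
Proof.
move=> j_gt0 jmj; apply: contrapT => digit_neq0.
apply: (increasing_enum_gap bP j_gt0 jmj); split; first by case/andP: jmj; lia.
by exists i; apply/eqP.
Qed.

Lemma increasing_enum_bracket n0 (X : R) : (s ^ b n0.+1)%:R <= X ->
  exists2 n, (n0 < n)%N & (s ^ b n)%:R <= X < (s ^ b n.+1)%:R.
Proof.
move=> X_ge.
have ex_gt : exists n, X < (s ^ b n.+1)%:R.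
  exists (Num.truncn X).+1; apply: lt_le_trans (truncnS_gt X) _; rewrite ler_nat.
  exact: leq_trans (leq_increasing_enum bP _) (ltnW (ltn_expl _ s_ge2)).
case: (ex_minnP ex_gt) => n X_lt n_min.
have n0n : (n0 < n)%N.
  have : (s ^ b n0.+1 < s ^ b n.+1)%N by rewrite -(ltr_nat R) (le_lt_trans X_ge).
  by rewrite ltn_exp2l // (increasing_enum_ltn_mono bP).
case: n n0n X_lt n_min => // n n0n X_lt n_min; exists n.+1 => //.
by rewrite X_lt andbT leNgt; apply/negP => /n_min; rewrite ltnn.
Qed.

Lemma digit_gap_floor_approx (nu : R) n0 : 0 < nu ->
  (forall n, (n0 <= n)%N -> nu < gap_ratio R b n) ->
  forall X, (s ^ b n0.+1)%:R <= X ->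
  exists2 N, (s ^ N)%:R <= X & floor_approx z (s ^ N) (X `^ (- nu)).
Proof.
move=> nu_gt0 gap_gt X X_ge.
have [n n0n /andP[Xge Xlt]] := increasing_enum_bracket X_ge.
have [j /andP[j_gt0 jn] gapj] := gap_ratio_gt (ltW nu_gt0) (gap_gt n (ltnW n0n)).
have bj_lt := bP.1 j j_gt0.
set g := (b j.+1 - (b j).+1)%N.
have gE : g%:R = (b j.+1)%:R - (b j)%:R - 1 :> R.
  by rewrite /g natrB // -[(b j).+1]addn1 natrD; lra.
have bn_gt0 : (0 < b n.+1)%N by apply: leq_trans _ (leq_increasing_enum bP n); lia.
exists (b j).
  apply: le_trans Xge; rewrite ler_nat leq_exp2l //.
  by rewrite (increasing_enum_leq_mono bP) // inE; lia.
have s_gt0 : (0 < s)%N by lia.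
move=> i; have zero_digits m : (b j < m <= b j + g)%N -> digit s (z i) m = 0.
  by case/andP=> jm mg; apply: digit_in_gap j_gt0 _; rewrite jm /=; lia.
have /andP[frac_ge0 frac_lt] := frac_lt_zero_digits s_gt0 zero_digits.
rewrite natrX (ger0_norm frac_ge0); apply: le_trans (ltW frac_lt) _.
apply: (@invr_expr_le_powRN _ _ _ _ (b n.+1)); rewrite ?ler1n ?natrX ?(ltW nu_gt0) //.
- by apply: lt_le_trans Xge; rewrite ltr0n expn_gt0 s_gt0.
- by rewrite -natrX ltW.
- by rewrite gE -ler_pdivlMr ?ltr0n // ltW.
Qed.

End DigitGapApproximation.

Lemma sup_liminf_gaps_le_omega_hat (R : realType) (k : nat) (zeta w : 'I_k -> R)
    (b : nat -> nat -> nat) :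
  (forall i, `|zeta i| <= 1) ->
  (forall s, (2 <= s)%N -> increasing_enum (nonzero_positions w s) (b s)) ->
  (forall (X nu : R) (x : nat), (0 < x)%N -> x%:R <= X ->
     floor_approx w x (X `^ (- nu)) -> admissible_nu zeta X nu) ->
  (sup_liminf_gaps R b <= omega_hat zeta)%E.
Proof.
move=> zeta_le1 bP admissible; apply: ge_ereal_sup => _ [s /= s_ge2 <-].
apply: lee_EFin_lt => nu nu_lt.
have [nu_le0|nu_gt0] := lerP nu 0.
  by apply: le_trans (omega_hat_ge0 zeta_le1); rewrite lee_fin.
have [n0 gap_gt] := lt_limn_einf nu_lt.
apply: (@omega_hat_ge _ _ _ _ (s ^ b s n0.+1)%:R) => X X_gt.
have [N sNX approx] := digit_gap_floor_approx s_ge2 (bP s s_ge2) nu_gt0 gap_gt (ltW X_gt).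
by apply: admissible approx; rewrite // expn_gt0 (ltn_trans _ s_ge2).
Qed.

Theorem proposition2p3 (R : realType) (k : nat) (zeta : 'I_k -> R)
  (b b' : nat -> nat -> nat) :
  (0 < k)%N ->
  (forall i, 0 < zeta i < 1) ->
  Q_lin_indep zeta ->
  (forall s, (2 <= s)%N -> increasing_enum (nonzero_positions zeta s) (b s)) ->
  (forall s, (2 <= s)%N ->
     increasing_enum (nonzero_positions (fun i => 1 - zeta i) s) (b' s)) ->
  (maxe (sup_liminf_gaps R b) (sup_liminf_gaps R b') <= omega_hat zeta)%E.
Proof.
move=> _ zeta01 _ bP b'P.
have zeta_le1 i : `|zeta i| <= 1.
  by have /andP[zeta_gt0 zeta_lt1] := zeta01 i; rewrite ger0_norm ltW.
rewrite ge_max; apply/andP; split.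
- exact: sup_liminf_gaps_le_omega_hat zeta_le1 bP (@admissible_nu_floor_approx _ _ _).
- exact: sup_liminf_gaps_le_omega_hat zeta_le1 b'P (@admissible_nu_floor_approx_compl _ _ _).
Qed.
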